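(* Assume $f_6=1$ and $\theta_i\ne0$. For every point $\xi\in\mathbb P^3$, the plane with dual coordinates $W_i(\xi)=A_i\xi$ is the polar plane of $\xi$ with respect to the linear complex $\mathcal L_i$; that is, it passes through $\xi$, and a line through $\xi$ lies in this plane if and only if it belongs to $\mathcal L_i$.
   Context: Work over an algebraically closed field of characteristic $\neq2$. $F(X)=\sum_{j=0}^6f_jX^j=\prod_{j=1}^6(X-\theta_j)$ with distinct roots. $A_i$ is the antisymmetric matrix $$A_i=\begin{pmatrix}0&-f_1-\frac{2f_0}{\theta_i}&a_{13}&\theta_i^2\\ f_1+\frac{2f_0}{\theta_i}&0&\theta_i^2(f_5+2\theta_i)&-\theta_i\\ -a_{13}&-\theta_i^2(f_5+2\theta_i)&0&1\\ -\theta_i^2&\theta_i&-1&0\end{pmatrix},\quad a_{13}=\theta_i(f_3+2f_4\theta_i+2f_5\theta_i^2+2\theta_i^3),$$ and $W_i(\xi)=A_i\xi$ ($\xi$ a column vector) is read as dual coordinates of a plane $\sum_j w_j\xi_j=0$. Lines in $\mathbb P^3$ have Grassmann coordinates $(X_1:\dots:X_6)=(p_{43}:p_{24}:p_{41}:p_{21}:p_{31}:p_{32})$, $p_{jl}=u_jv_l-u_lv_j$ for the line through $u,v$. Define the linear forms $p_0=X_1+f_1X_4$, $p_1=X_2+2f_2X_4+f_3X_5$, $p_2=X_3+2f_4X_5+2f_3X_4+f_5X_6$, $p_3=2f_4X_4+2f_5X_5+2X_6$, $p_4=2f_5X_4+2X_5$, $p_5=2X_4$. The linear complex $\mathcal L_i$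 is the set of lines whose Grassmann coordinates satisfy $\sum_{j=0}^5p_j\theta_i^j=0$. The polar plane of a point $\xi$ with respect to a linear complex is the plane containing all lines of the complex through $\xi$. *)

From HB Require Import structures.
From mathcomp Require Import all_boot all_order all_algebra.
Set Implicit Arguments. Unset Strict Implicit. Unset Printing Implicit Defensive.
Import GRing.Theory.
Local Open Scope ring_scope.

Section LinearComplex.
Variable K : fieldType.

(* 1-based coordinate xi_j of a point of P^3 given by a column vector in K^4 *)
Definition vc (u : 'cV[K]_4) (j : nat) : K := u (inord j.-1) 0.

Definition pl (u v : 'cV[K]_4) (j l : nat) : K :=
  vc u j * vc v l - vc u l * vc v j.

Definition grX (u v : 'cV[K]_4) (k : nat) : K :=
  match k with
  | 1 => pl u v 4 3
  | 2 => pl u v 2 4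
  | 3 => pl u v 4 1
  | 4 => pl u v 2 1
  | 5 => pl u v 3 1
  | _ => pl u v 3 2
  end.

(* the linear forms p_0, ..., p_5, with f_j = F`_j *)
Definition pform (F : {poly K}) (u v : 'cV[K]_4) (j : nat) : K :=
  let X := grX u v in
  match j with
  | 0 => X 1 + F`_1 * X 4
  | 1 => X 2 + 2%:R * F`_2 * X 4 + F`_3 * X 5
  | 2 => X 3 + 2%:R * F`_4 * X 5 + 2%:R * F`_3 * X 4 + F`_5 * X 6
  | 3 => 2%:R * F`_4 * X 4 + 2%:R * F`_5 * X 5 + 2%:R * X 6
  | 4 => 2%:R * F`_5 * X 4 + 2%:R * X 5
  | _ => 2%:R * X 4
  end.

Definition in_complex (F : {poly K}) (t : K) (u v : 'cV[K]_4) : Prop :=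
  \sum_(j < 6) pform F u v j * t ^+ j = 0.

Definition a13 (F : {poly K}) (t : K) : K :=
  t * (F`_3 + 2%:R * F`_4 * t + 2%:R * F`_5 * t ^+ 2 + 2%:R * t ^+ 3).

Definition Aentry (F : {poly K}) (t : K) (r c : nat) : K :=
  match r, c with
  | 1, 2 => - F`_1 - 2%:R * F`_0 / t
  | 1, 3 => a13 F t
  | 1, 4 => t ^+ 2
  | 2, 1 => F`_1 + 2%:R * F`_0 / t
  | 2, 3 => t ^+ 2 * (F`_5 + 2%:R * t)
  | 2, 4 => - t
  | 3, 1 => - a13 F t
  | 3, 2 => - (t ^+ 2 * (F`_5 + 2%:R * t))
  | 3, 4 => 1
  | 4, 1 => - t ^+ 2
  | 4, 2 => t
  | 4, 3 => -1
  | _, _ => 0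
  end.

Definition Amat (F : {poly K}) (t : K) : 'M[K]_4 :=
  \matrix_(r < 4, c < 4) Aentry F t r.+1 c.+1.

Definition on_plane (w x : 'cV[K]_4) : Prop :=
  \sum_(j < 4) w j 0 * x j 0 = 0.

End LinearComplex.

From HB Require Import structures.
From mathcomp Require Import all_boot all_order all_algebra.
From mathcomp Require Import ring.
Import GRing.Theory.
Local Open Scope ring_scope.

(* The heart of the proof is a bilinear identity: whenever t is a non-zero
   root of a polynomial F of degree at most 6 with F`_6 = 1, then for all
   points u, v
       W(u) . v  =  sum_j p_j(u, v) t^j ,         where W(u) = A(t) u,
   i.e. v lies on the plane A(t) u exactly when the line (u v) satisfies the
   equation of the complex L.  The root condition is needed only to eliminate
   the entry 2 f_0 / t of A(t), via f_0 = - t (f_1 + f_2 t + ... + t^5); after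
   this substitution the identity is a polynomial identity in the coordinates
   of u and v.  Since all Grassmann coordinates of the degenerate pair (u, u)
   vanish, the identity with v = u shows that the plane passes through u, and
   with v on a line through u it gives the polar-plane characterisation.  The
   theorem follows by applying this to t = theta_i, a root of
   F = prod_j (X - theta_j), which has degree 6. *)

Section PolarPlane.
Variable K : fieldType.

Lemma sum_ord4 (g : 'I_4 -> K) :
  \sum_(j < 4) g j = g (inord 0) + g (inord 1) + g (inord 2) + g (inord 3).
Proof.
rewrite !big_ord_recr big_ord0 /= add0r.
by congr (_ + _ + _ + _); congr g; apply/val_inj; rewrite /= inordK.
Qed.

(* At a root t of a monic sextic, the constant coefficient is determined by
   the others; this removes the division by t occurring in A(t). *)
Lemma sextic_root_const {F : {poly K}} {t : K} :
  (size F <= 7)%N -> F`_6 = 1 -> F.[t] = 0 ->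
  F`_0 = - t * (F`_1 + F`_2 * t + F`_3 * t ^+ 2 + F`_4 * t ^+ 3
                + F`_5 * t ^+ 4 + t ^+ 5).
Proof.
move=> szF f6; rewrite (horner_coef_wide _ szF) !big_ord_recr big_ord0 /= f6.
move=> root; apply/eqP; rewrite -subr_eq0; apply/eqP.
by rewrite -[X in _ = X]root; ring.
Qed.

Lemma Amat_pairing (F : {poly K}) (t : K) (u v : 'cV[K]_4) :
  t != 0 -> (size F <= 7)%N -> F`_6 = 1 -> F.[t] = 0 ->
  \sum_(j < 4) (Amat F t *m u) j 0 * v j 0 = \sum_(j < 6) pform F u v j * t ^+ j.
Proof.
move=> t_nz szF f6 /(sextic_root_const szF f6) f0E.
rewrite sum_ord4 !mxE !sum_ord4 !mxE !inordK // !big_ord_recr big_ord0 /=.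
rewrite /Aentry /a13 /pform /grX /pl /vc /= f0E.
by field.
Qed.

Lemma on_plane_Amat (F : {poly K}) (t : K) (u v : 'cV[K]_4) :
  t != 0 -> (size F <= 7)%N -> F`_6 = 1 -> F.[t] = 0 ->
  on_plane (Amat F t *m u) v <-> in_complex F t u v.
Proof. by move=> *; rewrite /on_plane /in_complex Amat_pairing. Qed.

Lemma in_complex_diag (F : {poly K}) (t : K) (u : 'cV[K]_4) :
  in_complex F t u u.
Proof.
have pl_diag a b : pl u u a b = 0 by rewrite /pl mulrC subrr.
by rewrite /in_complex !big_ord_recr big_ord0 /= /pform /grX !pl_diag; ring.
Qed.

End PolarPlane.

Lemma prod_XsubC_size_root {K : fieldType} {n : nat} (r : 'I_n -> K) (i : 'I_n) :
  let F := \prod_(j < n) ('X - (r j)%:P) in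
  size F = n.+1 /\ F.[r i] = 0.
Proof.
split; first by rewrite size_prod_XsubC [index_enum _]unlock -enumT size_enum_ord.
by rewrite (bigD1 i) //= hornerM hornerXsubC subrr mul0r.
Qed.

Theorem mainTheorem7 (K : closedFieldType) (char2 : (2%:R : K) != 0)
  (F : {poly K}) (theta : 'I_6 -> K)
  (theta_inj : injective theta)
  (F_def : F = \prod_(j < 6) ('X - (theta j)%:P))
  (f6 : F`_6 = 1)
  (i : 'I_6) (theta_nz : theta i != 0)
  (xi : 'cV[K]_4) (xi_nz : xi != 0) :
  let W := Amat F (theta i) *m xi in
  on_plane W xi /\
  (forall v : 'cV[K]_4, \rank (row_mx xi v) = 2%N ->
     ((on_plane W xi /\ on_plane W v) <-> in_complex F (theta i) xi v)).
Proof.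
move=> W.
have [szF rootF] := prod_XsubC_size_root theta i.
rewrite -F_def in szF rootF.
have W_polar v : on_plane W v <-> in_complex F (theta i) xi v.
  by apply: on_plane_Amat; rewrite ?szF.
have xi_on_W : on_plane W xi by apply/W_polar/in_complex_diag.
split=> // v _; split; first by case=> _ /W_polar.
by move/W_polar.
Qed.
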